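(* Let $(R,\mathfrak m)$ be a one-dimensional Cohen–Macaulay local ring admitting a canonical module $\omega_R$ with $R\subseteq\omega_R\subseteq\overline{R}$, let $B=\mathfrak m:\mathfrak m$, and let $\alpha\in\mathfrak m$. Then: (1) if $R$ is gAGL, $B$ is local with maximal ideal $\mathfrak n$ and $R/\mathfrak m\cong B/\mathfrak n$, then $\mathfrak m^2\subseteq R:\omega_R^2$; (2) if $R$ is not Gorenstein and $\alpha\mathfrak m=\mathfrak m^2$, then $(R:\omega_R):\mathfrak m=\{m/\alpha\mid m\in R:\omega_R\}$; (3) if $\alpha\mathfrak m=\mathfrak m^2$ and $R$ is not almost Gorenstein, then $\alpha\notin R:\omega_R$; (4) there exists a minimal system of generators of $\mathfrak m$ all of whose elements are regular (non-zero-divisors).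
   Context: $Q(R)$ is the total ring of fractions and $\overline R$ the integral closure of $R$ in $Q(R)$; for fractional ideals $I,J$, $I:J=\{r\in Q(R)\mid rJ\subseteq I\}$. $R$ is almost Gorenstein if $\mathfrak m\,\omega_R\subseteq\mathfrak m$. With $J(B)$ the Jacobson radical of $B$, $R$ is gAGL if $\mathfrak m\,\omega_R\,J(B)\subseteq R$. *)

(* A one-dimensional ring R together with its total ring of
   fractions Q(R) is modelled as a predicate R on a commutative ring Q that is
   (required to be) the total ring of fractions of R. *)
From HB Require Import structures.
From mathcomp Require Import all_boot all_order all_algebra.
Set Implicit Arguments. Unset Strict Implicit. Unset Printing Implicit Defensive.
Import GRing.Theory.
Local Open Scope ring_scope.

Section Defs.
Variable Q : comUnitRingType.

Definition qsubset (A B : Q -> Prop) := forall x, A x -> B x.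
Definition qseteq (A B : Q -> Prop) := qsubset A B /\ qsubset B A.
Definition qproper (A B : Q -> Prop) := qsubset A B /\ exists x, B x /\ ~ A x.

Definition is_subring (S : Q -> Prop) :=
  [/\ S 0, S 1, (forall x y, S x -> S y -> S (x - y))
    & (forall x y, S x -> S y -> S (x * y))].

Definition regular_in (R : Q -> Prop) (x : Q) :=
  R x /\ forall y, R y -> x * y = 0 -> y = 0.

Definition total_ring_of_fractions (R : Q -> Prop) :=
  (forall s, regular_in R s -> s \is a GRing.unit) /\
  (forall q, exists r s, R r /\ regular_in R s /\ q = r / s).

Definition span (R : Q -> Prop) (g : seq Q) : Q -> Prop :=
  fun x => exists c : seq Q, size c = size g /\ (forall i, R c`_i) /\
    x = \sum_(i < size g) c`_i * g`_i.

Definition submodule (R M : Q -> Prop) :=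
  [/\ M 0, (forall x y, M x -> M y -> M (x + y))
    & (forall r x, R r -> M x -> M (r * x))].

Definition ideal_of (S I : Q -> Prop) := qsubset I S /\ submodule S I.

Definition fin_gen (R M : Q -> Prop) := exists g : seq Q, qseteq M (span R g).

Definition noetherian (R : Q -> Prop) :=
  forall I, ideal_of R I -> fin_gen R I.

Definition prime_ideal (R P : Q -> Prop) :=
  [/\ ideal_of R P, ~ P 1 &
      forall x y, R x -> R y -> P (x * y) -> P x \/ P y].

Definition krull_dim_one (R : Q -> Prop) :=
  (exists P0 P1, [/\ prime_ideal R P0, prime_ideal R P1 & qproper P0 P1]) /\
  ~ (exists P0 P1 P2, [/\ prime_ideal R P0, prime_ideal R P1, prime_ideal R P2,
                         qproper P0 P1 & qproper P1 P2]).

Definition local_with (S m : Q -> Prop) :=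
  [/\ ideal_of S m, ~ m 1 &
      forall r, S r -> ~ m r -> exists u, S u /\ r * u = 1].

Definition maximal_ideal (S N : Q -> Prop) :=
  [/\ ideal_of S N, ~ N 1 &
      forall J, ideal_of S J -> qsubset N J -> J 1 \/ qseteq J N].

Definition jacobson (B : Q -> Prop) : Q -> Prop :=
  fun x => B x /\ forall N, maximal_ideal B N -> N x.

Definition colon (I J : Q -> Prop) : Q -> Prop :=
  fun q => forall j, J j -> I (q * j).

Definition prod (I J : Q -> Prop) : Q -> Prop :=
  fun x => exists s : seq (Q * Q),
    (forall p, p \in s -> I p.1 /\ J p.2) /\ x = \sum_(p <- s) p.1 * p.2.

Definition smul (a : Q) (I : Q -> Prop) : Q -> Prop :=
  fun x => exists y, I y /\ x = a * y.

Definition integral_closure (R : Q -> Prop) : Q -> Prop :=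
  fun q => exists n (c : 'I_n -> Q), (forall i, R (c i)) /\
    q ^+ n + \sum_(i < n) c i * q ^+ i = 0.

(* Canonical module (for a finitely generated R-submodule K of Q containing R,
   over a one-dimensional CM local ring (R,m)):  there is a regular x in m such
   that K/xK is a canonical module of the Artinian local ring R/xR, i.e. K/xK is
   a faithful R/xR-module whose socle is one-dimensional over R/m
   (Bruns-Herzog 3.3.5 and the Artinian case). *)
Definition canonical_module (R m K : Q -> Prop) :=
  submodule R K /\ fin_gen R K /\
  exists x, [/\ m x, regular_in R x,
    (forall r, R r -> (forall k, K k -> smul x K (r * k)) -> smul x R r) &
    exists s, [/\ K s, ~ smul x K s, (forall a, m a -> smul x K (a * s)) &
      forall w, K w -> (forall a, m a -> smul x K (a * w)) ->
        exists r, R r /\ smul x K (w - r * s)]].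

Definition gorenstein (R m : Q -> Prop) := canonical_module R m R.

Definition almost_gorenstein (R m w : Q -> Prop) := qsubset (prod m w) m.

Definition gAGL (R m w : Q -> Prop) :=
  qsubset (prod (prod m w) (jacobson (colon m m))) R.

Definition min_gens (R M : Q -> Prop) (g : seq Q) :=
  qseteq M (span R g) /\
  forall g' : seq Q, qseteq M (span R g') -> (size g <= size g')%N.

End Defs.

From Pilot Require Import Defs.
From HB Require Import structures.
From mathcomp Require Import all_boot all_order all_algebra.
From mathcomp Require Import ring.
From Stdlib Require Import Classical.
Set Implicit Arguments. Unset Strict Implicit. Unset Printing Implicit Defensive.
Import GRing.Theory.
Local Open Scope ring_scope.

(* Two facts about the local ring (R, m) drive everything: an element of m
   times an element integral over R is never 1, so such a product lying in R
   lies in m; and 1 + t is a unit for t in m.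
   (1) As n lies in the Jacobson radical of B, gAGL gives m omega m in R, hence
   m omega in B.  An element of m omega that were a unit of B would force
   n in m, and then the residue field hypothesis would put it in R, hence in
   m, which is contained in n.  So m omega lies in n, inside J(B), and
   m^2 omega^2 lies in m omega J(B), inside R.
   (2), (3) alpha is a non-zero-divisor (x^2 lies in alpha m for a regular x
   in m), hence a unit of Q, and m^2 = alpha m lets one divide a product of
   two elements of m by alpha without leaving m.  If R is not Gorenstein then
   (R : omega) omega lies in m, for a unit y k there would make omega = k R
   principal and R its own canonical module.  If alpha is in R : omega then
   alpha omega lies in m, so m omega lies in alpha^-1 m^2 = m.
   (4) Replace the generators g of a minimal system one at a time by g + x^K,
   x in m regular.  For K >= 2 this is again a minimal system, and for K
   large g + x^K is regular: the annihilators of the g + x^i are independent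
   (x^i - x^j is a power of x times a unit), while their partial sums form an
   ascending chain of ideals, which stabilises. *)

Lemma prod_mem (Q : comUnitRingType) (I J : Q -> Prop) a b :
  I a -> J b -> prod I J (a * b).
Proof.
move=> Ia Jb; exists [:: (a, b)]; split; last by rewrite big_seq1.
by move=> p; rewrite inE => /eqP ->.
Qed.

Lemma nth_mkseq_pred (Q : comUnitRingType) (P : Q -> Prop) (f : nat -> Q) n j :
  P 0 -> (forall i, (i < n)%N -> P (f i)) -> P (mkseq f n)`_j.
Proof.
move=> P0 Pf; case: (ltnP j n) => jn; first by rewrite nth_mkseq //; apply: Pf.
by rewrite nth_default // size_mkseq.
Qed.

Section Subring.
Variables (Q : comUnitRingType) (R : Q -> Prop).
Hypothesis HR : is_subring R.

Lemma subring_add x y : R x -> R y -> R (x + y).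
Proof.
case: HR => R0 _ RB _ Rx Ry.
have -> : x + y = x - (0 - y) by rewrite sub0r opprK.
exact: RB _ _ Rx (RB _ _ R0 Ry).
Qed.

Lemma subring_opp x : R x -> R (- x).
Proof. by case: HR => R0 _ RB _ Rx; rewrite -sub0r; apply: RB. Qed.

Lemma subring_exp x n : R x -> R (x ^+ n).
Proof.
case: HR => _ R1 _ RM Rx; elim: n => [|n IH]; first by rewrite expr0.
by rewrite exprS; apply: RM.
Qed.

Lemma subring_submodule : submodule R R.
Proof. by case: HR => R0 _ _ RM; split => //; apply: subring_add. Qed.

Lemma submodule_opp M x : submodule R M -> M x -> M (- x).
Proof.
case=> _ _ MM Mx; rewrite -mulN1r; apply: MM => //.
by apply: subring_opp; case: HR.
Qed.

Lemma submodule_sum M (I : Type) (r : seq I) (P : pred I) (F : I -> Q) :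
  submodule R M -> (forall i, P i -> M (F i)) -> M (\sum_(i <- r | P i) F i).
Proof. by case=> M0 MD _ MF; elim/big_ind: _. Qed.

Lemma mulr_submodule M x : submodule R M -> submodule R (fun y => M (x * y)).
Proof.
case=> M0 MD MM; split=> [|y z My Mz|r y Rr My]; first by rewrite mulr0.
  by rewrite mulrDr; apply: MD.
by rewrite mulrCA; apply: MM.
Qed.

Lemma prod_sub I J M :
  submodule R M -> (forall a b, I a -> J b -> M (a * b)) -> qsubset (prod I J) M.
Proof.
move=> HM IJM _ [s [Hs ->]]; rewrite big_seq.
by apply: submodule_sum HM _ => p /Hs[Ip Jp]; apply: IJM.
Qed.

Lemma prod_colon I J K L M : submodule R M ->
  (forall a b c d, I a -> J b -> K c -> L d -> M (a * b * (c * d))) ->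
  qsubset (prod I J) (colon M (prod K L)).
Proof.
move=> HM H _ [s [Hs ->]] y KLy; rewrite big_seq mulr_suml.
apply: submodule_sum (HM) _ => p /Hs[Ip Jp].
by apply: prod_sub (mulr_submodule _ HM) _ _ KLy => c d Kc Ld; apply: H.
Qed.

Lemma span_submodule g : submodule R (Defs.span R g).
Proof.
have [R0 _ _ RM] := HR; split.
- exists (nseq (size g) 0); split; first by rewrite size_nseq.
  split; first by move=> i; rewrite nth_nseq; case: ifP.
  by rewrite big1 // => i _; rewrite nth_nseq ltn_ord mul0r.
- move=> _ _ [c [_ [Rc ->]]] [d [_ [Rd ->]]].
  exists (mkseq (fun i => c`_i + d`_i) (size g)); split; first by rewrite size_mkseq.
  split; first by move=> j; apply: nth_mkseq_pred => // i _; apply: subring_add.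
  by rewrite -big_split; apply: eq_bigr => i _; rewrite nth_mkseq // mulrDl.
- move=> r _ Rr [c [_ [Rc ->]]].
  exists (mkseq (fun i => r * c`_i) (size g)); split; first by rewrite size_mkseq.
  split; first by move=> j; apply: nth_mkseq_pred => // i _; apply: RM.
  by rewrite mulr_sumr; apply: eq_bigr => i _; rewrite nth_mkseq // mulrA.
Qed.

Lemma span_mem g i : (i < size g)%N -> Defs.span R g g`_i.
Proof.
have [R0 R1 _ _] := HR; move=> ig.
exists (mkseq (fun j => if j == i then 1 else 0) (size g)).
split; first by rewrite size_mkseq.
split; first by move=> j; apply: nth_mkseq_pred => // k _; case: ifP.
rewrite (bigD1 (Ordinal ig)) //= nth_mkseq // eqxx mul1r big1 ?addr0 // => j.
by rewrite -val_eqE /= => ji; rewrite nth_mkseq // ifN ?mul0r.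
Qed.

Lemma span_sub M g :
  submodule R M -> (forall i, (i < size g)%N -> M g`_i) -> qsubset (Defs.span R g) M.
Proof.
case=> M0 MD MM Mg _ [c [_ [Rc ->]]].
by elim/big_ind: _ => // i _; apply: MM => //; apply: Mg.
Qed.

Definition annihilator (a : Q) : Q -> Prop := fun z => R z /\ a * z = 0.

Lemma annihilator_submodule a : submodule R (annihilator a).
Proof.
have [R0 _ _ RM] := HR.
split=> [|y z [Ry ey] [Rz ez]|r y Rr [Ry ey]]; split.
- exact: R0.
- by rewrite mulr0.
- exact: subring_add.
- by rewrite mulrDr ey ez addr0.
- exact: RM.
- by rewrite mulrCA ey mulr0.
Qed.

Lemma regular1 : regular_in R 1.
Proof. by case: HR => _ R1 _ _; split=> // y _; rewrite mul1r. Qed.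

Lemma regular_mul x y : regular_in R x -> regular_in R y -> regular_in R (x * y).
Proof.
case: HR => _ _ _ RM [Rx rx] [Ry ry]; split=> [|z Rz]; first exact: RM.
by rewrite -mulrA => /(rx _ (RM _ _ Ry Rz)) /(ry _ Rz).
Qed.

Lemma regular_exp x n : regular_in R x -> regular_in R (x ^+ n).
Proof.
move=> rx; elim: n => [|n IH]; first by rewrite expr0; apply: regular1.
by rewrite exprS; apply: regular_mul.
Qed.

Lemma regular_factor a b : R a -> regular_in R (a * b) -> regular_in R a.
Proof.
move=> Ra [_ rab]; split=> // y Ry ay0; apply: rab Ry _.
by rewrite mulrAC ay0 mul0r.
Qed.

End Subring.

Lemma local_nonunit (Q : comUnitRingType) (S n : Q -> Prop) t u :
  local_with S n -> n t -> S u -> t * u <> 1.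
Proof. by case=> [[_ [_ _ nM]] n1 _] nt Su tu1; apply: n1; rewrite -tu1 mulrC; apply: nM. Qed.

Lemma local_sub_jacobson (Q : comUnitRingType) (S n : Q -> Prop) :
  local_with S n -> qsubset n (jacobson S).
Proof.
move=> Hn; have [[nS In] _ nU] := Hn.
move=> t nt; split=> [|N [[NS [_ _ NM]] N1 Nmax]]; first exact: nS.
have N_sub_n : qsubset N n.
  move=> x Nx; apply: NNPP => nx; have [u [Su xu]] := nU x (NS x Nx) nx.
  by apply: N1; rewrite -xu mulrC; apply: NM.
have [n1 | [n_sub_N _]] := Nmax n (conj nS In) N_sub_n; last exact: n_sub_N.
by have [_ /(_ n1)] := Hn.
Qed.

Section Local.
Variables (Q : comUnitRingType) (R m : Q -> Prop).
Hypotheses (HR : is_subring R) (Hl : local_with R m).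

Lemma maxideal_exp x k : m x -> (0 < k)%N -> m (x ^+ k).
Proof.
have [[mR [_ _ mM]] _ _] := Hl.
by move=> mx /prednK <-; rewrite exprSr; apply: mM => //; apply: (subring_exp HR _ (mR _ mx)).
Qed.

Lemma local_unit1D t : m t -> exists u, R u /\ (1 + t) * u = 1.
Proof.
have [[mR mS] m1 mU] := Hl; have [_ R1 _ _] := HR.
move=> mt; apply: mU; first by apply: subring_add => //; apply: mR.
move=> m1t; apply: m1; rewrite -(addrK t 1).
by have [_ mD _] := mS; apply: mD => //; apply: (submodule_opp HR mS mt).
Qed.

Lemma regular_expB x i k :
  m x -> regular_in R x -> (i < k)%N -> regular_in R (x ^+ i - x ^+ k).
Proof.
have [[mR mS] _ _] := Hl.
move=> mx rx ik; have mt : m (- x ^+ (k - i)).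
  by apply: (submodule_opp HR mS); apply: maxideal_exp; rewrite // subn_gt0.
have [u [Ru tu]] := local_unit1D mt.
have -> : x ^+ i - x ^+ k = x ^+ i * (1 - x ^+ (k - i)).
  by rewrite mulrBr mulr1 -exprD subnKC // ltnW.
apply: (regular_mul HR (regular_exp HR _ rx)).
apply: (regular_factor (b := u)); last by rewrite tu; apply: (regular1 HR).
by apply: (subring_add HR); [case: HR | apply: mR].
Qed.

Lemma maxideal_mul_integral_neq1 y z : m y -> integral_closure R z -> y * z <> 1.
Proof.
have [[mR mS] m1 _] := Hl.
move=> my [n [c [Rc Hz]]] yz1; apply: m1.
have E : y ^+ n * (z ^+ n + \sum_(i < n) c i * z ^+ i) = 1 + \sum_(i < n) c i * y ^+ (n - i).
  rewrite mulrDr -exprMn yz1 expr1n mulr_sumr; congr (_ + _); apply: eq_bigr => i _.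
  by rewrite -{1}(subnK (ltnW (ltn_ord i))) exprD mulrCA -mulrA -exprMn yz1 expr1n mulr1.
have -> : 1 = - \sum_(i < n) c i * y ^+ (n - i).
  by apply/eqP; rewrite -addr_eq0 -E Hz mulr0.
apply: (submodule_opp HR mS); apply: (submodule_sum _ mS) => i _.
by have [_ _ mM] := mS; apply: mM => //; apply: maxideal_exp; rewrite // subn_gt0.
Qed.

Lemma maxideal_mul_integral y z : m y -> integral_closure R z -> R (y * z) -> m (y * z).
Proof.
have [[_ [_ _ mM]] _ mU] := Hl.
move=> my Iz Ryz; apply: NNPP => nyz; have [u [Ru yzu]] := mU _ Ryz nyz.
apply: (maxideal_mul_integral_neq1 (y := u * y)) Iz _; first exact: mM.
by rewrite -yzu; ring.
Qed.

Lemma sub_colon_maxideal : qsubset R (colon m m).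
Proof. by have [[_ [_ _ mM]] _ _] := Hl; move=> r Rr j; apply: mM. Qed.

Lemma maxideal_sub_local_colon n : local_with (colon m m) n -> qsubset m n.
Proof.
move=> Hn a ma; have [[mR _] m1 _] := Hl; have [_ _ nU] := Hn.
apply: NNPP => na; have [u [Bu au]] := nU a (sub_colon_maxideal (mR a ma)) na.
by apply: m1; rewrite -au mulrC; apply: Bu.
Qed.

End Local.

Lemma gorenstein_of_canonical_unit (Q : comUnitRingType) (R m w : Q -> Prop) y z :
  is_subring R -> canonical_module R m w -> colon R w y -> w z -> y * z = 1 ->
  gorenstein R m.
Proof.
move=> HR [[_ _ wM] [_ [x [mx rx _ [s [ws nxs soc gen]]]]]] Cy wz yz.
have [R0 R1 _ _] := HR.
split; first exact: subring_submodule.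
split.
  exists [:: 1]; split=> [r Rr | _ [c [_ [Rc ->]]]]; last by rewrite big_ord1 mulr1.
  by exists [:: r]; split=> //; split=> [[|[|i]] | ] //=; rewrite big_ord1 mulr1.
exists x; split=> //; first by move=> r Rr /(_ 1 R1); rewrite mulr1.
exists (y * s); split.
- exact: Cy.
- move=> [r [Rr e]]; apply: nxs; exists (r * z); split; first exact: wM.
  by rewrite mulrA -e -mulrA mulrCA yz mulr1.
- move=> a ma; have [k [wk e]] := soc a ma.
  by exists (y * k); split; [apply: Cy | rewrite mulrCA e mulrCA].
- move=> v Rv vsoc; have [|r [Rr [k [wk e]]]] := gen (v * z) (wM _ _ Rv wz).
    move=> a ma; have [r [Rr e]] := vsoc a ma.
    by exists (r * z); split; [apply: wM | rewrite mulrA e mulrA].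
  exists r; split=> //; exists (y * k); split; first exact: Cy.
  have -> : v - r * (y * s) = y * (v * z - r * s).
    by rewrite mulrBr (mulrCA y v) yz mulr1 (mulrCA y r).
  by rewrite e mulrCA.
Qed.

Lemma colon_canonical_mul_maxideal (Q : comUnitRingType) (R m w : Q -> Prop) y k :
  is_subring R -> local_with R m -> canonical_module R m w -> ~ gorenstein R m ->
  colon R w y -> w k -> m (y * k).
Proof.
move=> HR [_ _ mU] Hc ng Cy wk; have [[_ _ wM] _] := Hc.
apply: NNPP => nyk; have [u [Ru yku]] := mU _ (Cy _ wk) nyk.
apply: ng; apply: (gorenstein_of_canonical_unit HR Hc Cy (wM _ _ Ru wk)).
by rewrite mulrCA mulrC.
Qed.

Section GeneralizedAlmostGorenstein.
Variables (Q : comUnitRingType) (R m w n : Q -> Prop).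
Hypotheses (HR : is_subring R) (Hl : local_with R m).
Hypotheses (wI : qsubset w (integral_closure R)) (Hg : gAGL R m w).
Hypothesis Hn : local_with (colon m m) n.
Hypothesis Hres : forall b, colon m m b -> exists r, R r /\ n (b - r).

Lemma gAGL_mul a k t : m a -> w k -> n t -> R (a * k * t).
Proof.
move=> ma wk nt; apply: Hg; apply: (prod_mem (prod_mem ma wk)).
exact: (local_sub_jacobson Hn nt).
Qed.

Lemma maxideal_canonical_sub_colon a k : m a -> w k -> colon m m (a * k).
Proof.
have [[mR [_ _ mM]] _ _] := Hl.
move=> ma wk j mj; rewrite mulrAC.
apply: (maxideal_mul_integral HR Hl (mM _ _ (mR _ ma) mj) (wI wk)).
by rewrite mulrAC; apply: gAGL_mul => //; apply: (maxideal_sub_local_colon Hl Hn).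
Qed.

Lemma maxideal_canonical_sub_local a k : m a -> w k -> n (a * k).
Proof.
move=> ma wk; have Bak := maxideal_canonical_sub_colon ma wk.
have [[_ [_ _ nM]] _ nU] := Hn; have [[mR _] _ mU] := Hl.
apply: NNPP => nak; have [c [Bc akc]] := nU _ Bak nak.
have n_sub_m : qsubset n m.
  move=> t nt; have Rt : R t.
    by rewrite -[t]mul1r -akc -mulrA; apply: gAGL_mul => //; apply: nM.
  apply: NNPP => mt; have [u [Ru tu]] := mU t Rt mt.
  exact: (local_nonunit Hn nt (sub_colon_maxideal Hl Ru) tu).
have [r [Rr nr]] := Hres Bak.
apply: nak; apply: (maxideal_sub_local_colon Hl Hn).
apply: (maxideal_mul_integral HR Hl ma (wI wk)).
by rewrite -[a * k](subrK r); apply: (subring_add HR _ Rr); apply: mR; apply: n_sub_m.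
Qed.

Lemma gAGL_maxideal_sq_sub : qsubset (prod m m) (colon R (prod w w)).
Proof.
apply: (prod_colon (subring_submodule HR)) => a b k l ma mb wk wl.
by rewrite mulrACA mulrC; apply: gAGL_mul => //; apply: maxideal_canonical_sub_local.
Qed.

End GeneralizedAlmostGorenstein.

Section Reduction.
Variables (Q : comUnitRingType) (R m : Q -> Prop) (alpha : Q).
Hypotheses (HR : is_subring R) (Hl : local_with R m) (malpha : m alpha).
Hypothesis Hsq : qsubset (prod m m) (smul alpha m).

Lemma reduction_regular x : m x -> regular_in R x -> regular_in R alpha.
Proof.
move=> mx rx; have [[mR _] _ _] := Hl; have [y [my xx]] := Hsq (prod_mem mx mx).
by apply: (regular_factor (b := y) (mR _ malpha)); rewrite -xx; apply: regular_mul.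
Qed.

Hypothesis ua : alpha \is a GRing.unit.

Lemma reduction_divl a b : m a -> m b -> m (alpha^-1 * (a * b)).
Proof. by move=> ma mb; have [c [mc ->]] := Hsq (prod_mem ma mb); rewrite mulKr. Qed.

Lemma colon_colon_canonical_maxideal w : canonical_module R m w -> ~ gorenstein R m ->
  qseteq (colon (colon R w) m) (fun x => exists y, colon R w y /\ x = y / alpha).
Proof.
move=> Hc ng; have [[mR _] _ _] := Hl.
split=> [z Cz | _ [y [Cy ->]] j mj k wk].
  by exists (z * alpha); split; [apply: Cz | rewrite mulrK].
have -> : y / alpha * j * k = alpha^-1 * (y * k * j) by ring.
apply: mR; apply: (reduction_divl _ mj).
exact: (colon_canonical_mul_maxideal HR Hl Hc ng Cy wk).
Qed.

Lemma almost_gorenstein_of_colon_canonical w :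
  qsubset w (integral_closure R) -> colon R w alpha -> almost_gorenstein R m w.
Proof.
move=> wI Cw; have [[_ mS] _ _] := Hl.
apply: (prod_sub mS) => a k ma wk.
have -> : a * k = alpha^-1 * (a * (alpha * k)) by rewrite mulrCA mulKr.
exact: (reduction_divl ma (maxideal_mul_integral HR Hl malpha (wI _ wk) (Cw _ wk))).
Qed.

End Reduction.

Lemma noetherian_chain_stationary (Q : comUnitRingType) (R : Q -> Prop)
    (I : nat -> Q -> Prop) :
  is_subring R -> noetherian R -> (forall K, ideal_of R (I K)) ->
  (forall K K', (K <= K')%N -> qsubset (I K) (I K')) ->
  exists K, forall K', qsubset (I K') (I K).
Proof.
move=> HR Hn HI Imono; pose U z := exists K, I K z.
have UI : ideal_of R U.
  split; first by move=> z [K]; apply: (HI K).1.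
  split=> [|a b [Ka Ia] [Kb Ib]|r a Rr [K Ia]].
  - by exists 0%N; have [_ []] := HI 0%N.
  - exists (maxn Ka Kb); have [_ [_ ID _]] := HI (maxn Ka Kb).
    by apply: ID; [apply: Imono Ia; apply: leq_maxl | apply: Imono Ib; apply: leq_maxr].
  - by exists K; have [_ [_ _ IM]] := HI K; apply: IM.
have [c [Uc cU]] := Hn U UI.
have bound s : (forall i, (i < size s)%N -> U s`_i) ->
    exists K, forall i, (i < size s)%N -> I K s`_i.
  elim: s => [|a s IH] Us; first by exists 0%N.
  have [Ka Ia] := Us 0%N isT; have [Ks Is] := IH (fun i => Us i.+1).
  exists (maxn Ka Ks) => -[_ | i /Is]; first by apply: Imono Ia; apply: leq_maxl.
  by apply: Imono; apply: leq_maxr.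
have [K HK] := bound c (fun i ic => cU _ (span_mem HR ic)).
by exists K => K' z IK'z; apply: (span_sub (HI K).2 HK); apply: Uc; exists K'.
Qed.

Section RegularTranslate.
Variables (Q : comUnitRingType) (R m : Q -> Prop) (g x : Q).
Hypotheses (HR : is_subring R) (Hl : local_with R m).
Hypotheses (mx : m x) (rx : regular_in R x) (Rg : R g).

Definition sum_ann_translates (K : nat) : Q -> Prop := fun z =>
  exists zs : nat -> Q,
    (forall i, (i < K)%N -> annihilator R (g + x ^+ i) (zs i)) /\ z = \sum_(i < K) zs i.

Lemma sum_ann_translates_ideal K : ideal_of R (sum_ann_translates K).
Proof.
split=> [_ [zs [Hzs ->]]|].
  by apply: (submodule_sum _ (subring_submodule HR)) => i _; case: (Hzs i (ltn_ord i)).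
split=> [|_ _ [zs [Hzs ->]] [zs' [Hzs' ->]]|r _ Rr [zs [Hzs ->]]].
- exists (fun=> 0); split=> [i _|]; last by rewrite big1_eq.
  by have [] := annihilator_submodule HR (g + x ^+ i).
- exists (fun i => zs i + zs' i); split=> [i iK|]; last by rewrite big_split.
  have [_ AD _] := annihilator_submodule HR (g + x ^+ i).
  by apply: AD; [apply: Hzs | apply: Hzs'].
- exists (fun i => r * zs i); split=> [i iK|]; last by rewrite mulr_sumr.
  by have [_ _ AM] := annihilator_submodule HR (g + x ^+ i); apply: AM => //; apply: Hzs.
Qed.

Lemma sum_ann_translates_mono K K' :
  (K <= K')%N -> qsubset (sum_ann_translates K) (sum_ann_translates K').
Proof.
move=> KK' _ [zs [Hzs ->]]; exists (fun i => if (i < K)%N then zs i else 0); split.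
  move=> i _; case: ifP => [/Hzs // | _].
  by have [] := annihilator_submodule HR (g + x ^+ i).
by rewrite (big_ord_widen K' zs KK') big_mkcond.
Qed.

Lemma annihilator_sub_sum_ann_translates K :
  qsubset (annihilator R (g + x ^+ K)) (sum_ann_translates K.+1).
Proof.
move=> z Az; exists (fun i => if i == K then z else 0); split.
  move=> i _; case: eqP => [-> // | _].
  by have [] := annihilator_submodule HR (g + x ^+ i).
rewrite big_ord_recr /= eqxx big1 ?add0r // => i _.
by rewrite ifN // neq_ltn ltn_ord.
Qed.

Lemma sum_ann_translates_annihilator_eq0 K z :
  sum_ann_translates K z -> annihilator R (g + x ^+ K) z -> z = 0.
Proof.
suff indep n zs : (n <= K)%N -> (forall i, (i < n)%N -> annihilator R (g + x ^+ i) (zs i)) ->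
    annihilator R (g + x ^+ K) (\sum_(i < n) zs i) -> \sum_(i < n) zs i = 0.
  by case=> zs [Hzs ->]; apply: indep.
have R_powB i j : R (x ^+ i - x ^+ j).
  have [[mR _] _ _] := Hl; have [_ _ RB _] := HR.
  by apply: RB; apply: (subring_exp HR); apply: mR.
elim: n zs => [|n IH] zs nK Hzs Az; first by rewrite big_ord0.
apply: (regular_expB HR Hl mx rx nK).2 Az.1 _.
have E : \sum_(i < n) (x ^+ n - x ^+ i) * zs i = (x ^+ n - x ^+ K) * \sum_(i < n.+1) zs i.
  set S := \sum_(i < n.+1) zs i.
  have -> : (x ^+ n - x ^+ K) * S = (g + x ^+ n) * S - (g + x ^+ K) * S by ring.
  rewrite Az.2 subr0 /S big_ord_recr /= mulrDr (Hzs n (ltnSn n)).2 addr0 mulr_sumr.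
  apply: eq_bigr => i _.
  have -> : (x ^+ n - x ^+ i) * zs i = (g + x ^+ n) * zs i - (g + x ^+ i) * zs i by ring.
  by rewrite (Hzs i (ltnW (ltn_ord i))).2 subr0.
rewrite -E; apply: (IH (fun i => (x ^+ n - x ^+ i) * zs i) (ltnW nK)).
- move=> i ilt; have [_ _ AM] := annihilator_submodule HR (g + x ^+ i).
  by apply: AM => //; apply: Hzs; apply: ltnW.
- by rewrite E; have [_ _ AM] := annihilator_submodule HR (g + x ^+ K); apply: AM.
Qed.

Lemma regular_translate : noetherian R -> exists K, (2 <= K)%N /\ regular_in R (g + x ^+ K).
Proof.
move=> Hn; have [K0 HK0] := noetherian_chain_stationary HR Hn
  sum_ann_translates_ideal sum_ann_translates_mono.
have Rx : R x by have [[mR _] _ _] := Hl; apply: mR.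
exists (maxn K0 2); split; first exact: leq_maxr.
split=> [|z Rz ez]; first by apply: (subring_add HR Rg); apply: (subring_exp HR).
apply: (sum_ann_translates_annihilator_eq0 _ (conj Rz ez)).
apply: (sum_ann_translates_mono (leq_maxl K0 2)); apply: HK0.
exact: (annihilator_sub_sum_ann_translates (conj Rz ez)).
Qed.

End RegularTranslate.

Lemma min_gens_exists (Q : comUnitRingType) (R M : Q -> Prop) :
  fin_gen R M -> exists g, min_gens R M g.
Proof.
move=> [g0 Hg0].
suff shorter n g : (size g <= n)%N -> qseteq M (Defs.span R g) -> exists g, min_gens R M g.
  exact: shorter _ g0 (leqnn _) Hg0.
elim: n g => [|n IH] g gn Hg; first by exists g; split=> // g' _; apply: leq_trans gn _.
have [[g' [Hg' g'g]] | none] :=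
  classic (exists g', qseteq M (Defs.span R g') /\ (size g' < size g)%N).
  by apply: (IH g') => //; rewrite -ltnS (leq_trans g'g gn).
by exists g; split=> // g' Hg'; rewrite leqNgt; apply/negP => g'g; apply: none; exists g'.
Qed.

Section MinimalGenerators.
Variables (Q : comUnitRingType) (R m : Q -> Prop).
Hypotheses (HR : is_subring R) (Hl : local_with R m).

Lemma span_mul_maxideal y z g : m y -> Defs.span R g z -> Defs.span m g (y * z).
Proof.
have [[mR [m0 _ mM]] _ _] := Hl.
move=> my [c [_ [Rc ->]]]; exists (mkseq (fun i => y * c`_i) (size g)).
split; first by rewrite size_mkseq.
split; first by move=> j; apply: nth_mkseq_pred => // i _; rewrite mulrC; apply: mM.
by rewrite mulr_sumr; apply: eq_bigr => i _; rewrite nth_mkseq // mulrA.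
Qed.

Lemma exp_span_maxideal x g K :
  qsubset m (Defs.span R g) -> m x -> (1 < K)%N -> Defs.span m g (x ^+ K).
Proof.
move=> m_sub_g mx; case: K => [|[|K]] // _.
by rewrite exprSr; apply: span_mul_maxideal; [apply: (maxideal_exp HR Hl) | apply: m_sub_g].
Qed.

Lemma min_gens_set_nth g k t : min_gens R m g -> (k < size g)%N -> Defs.span m g t ->
  min_gens R m (set_nth 0 g k (g`_k + t)).
Proof.
move=> [[m_sub_g g_sub_m] gmin] kg [d [_ [md ->]]].
have [[mR mS] _ _] := Hl; have [m0 mD mM] := mS.
set g' := set_nth _ _ _ _.
have size_g' : size g' = size g by rewrite size_set_nth; apply/maxn_idPr.
have nth_g' j : g'`_j = if j == k then g`_k + \sum_(i < size g) d`_i * g`_i else g`_j.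
  by rewrite nth_set_nth.
have gm j : (j < size g)%N -> m g`_j by move=> jg; apply: g_sub_m; apply: (span_mem HR).
have Sg' := span_submodule HR g'; have [_ SD SM] := Sg'.
have g'_span j : (j < size g)%N -> j != k -> Defs.span R g' g`_j.
  move=> jg jk; have -> : g`_j = g'`_j by rewrite nth_g' (negbTE jk).
  by apply: (span_mem HR); rewrite size_g'.
have gk : Defs.span R g' g`_k.
  have [u [Ru du]] := local_unit1D HR Hl (md k).
  pose W := \sum_(i < size g | i != Ordinal kg) d`_i * g`_i.
  have SW : Defs.span R g' W.
    apply: (submodule_sum _ Sg') => i ik; apply: SM; first exact: mR.
    by apply: g'_span => //; apply: contra ik => /eqP ik; apply/eqP; apply: val_inj.
  have -> : g`_k = u * (g'`_k - W).
    rewrite nth_g' eqxx (bigD1 (Ordinal kg)) //= -/W.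
    transitivity (g`_k * ((1 + d`_k) * u)); first by rewrite du mulr1.
    ring.
  apply: SM => //; apply: SD; first by apply: (span_mem HR); rewrite size_g'.
  exact: (submodule_opp HR Sg' SW).
split; first split.
- move=> z /m_sub_g; apply: (span_sub Sg') => j jg.
  by case: (eqVneq j k) => [-> // | jk]; apply: g'_span.
- apply: (span_sub mS) => j; rewrite size_g' nth_g' => jg; case: ifP => _; last exact: gm.
  apply: mD; first exact: gm.
  by apply: (submodule_sum _ mS) => i _; apply: mM; [apply: mR | apply: gm].
- by move=> g'' Hg''; rewrite size_g'; apply: gmin.
Qed.

Lemma regular_min_gens_exists : noetherian R -> (exists x, m x /\ regular_in R x) ->
  exists g, min_gens R m g /\ forall i, (i < size g)%N -> regular_in R g`_i.
Proof.
move=> Hn [x [mx rx]]; have [Im _ _] := Hl.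
have [g0 Hg0] := min_gens_exists (Hn m Im).
suff prefix k : (k <= size g0)%N -> exists g, [/\ min_gens R m g, size g = size g0 &
    forall i, (i < k)%N -> regular_in R g`_i].
  by have [g [Hg sg Hr]] := prefix _ (leqnn _); exists g; split=> // i; rewrite sg; apply: Hr.
elim: k => [|k IH] kg0; first by exists g0.
have [g [Hg sg Hr]] := IH (ltnW kg0).
have kg : (k < size g)%N by rewrite sg.
have [[m_sub_g g_sub_m] _] := Hg.
have Rgk : R g`_k by have [[mR _] _ _] := Hl; apply: mR; apply: g_sub_m; apply: (span_mem HR).
have [K [K2 rK]] := regular_translate HR Hl mx rx Rgk Hn.
exists (set_nth 0 g k (g`_k + x ^+ K)); split.
- by apply: min_gens_set_nth => //; apply: exp_span_maxideal.
- by rewrite size_set_nth -sg; apply/maxn_idPr.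
- move=> i ik; rewrite nth_set_nth /=; case: eqP => [// | /eqP ik'].
  by apply: Hr; rewrite ltn_neqAle ik' -ltnS.
Qed.

End MinimalGenerators.

Theorem lemma2p5 (Q : comUnitRingType) (R m w : Q -> Prop) (alpha : Q) :
  is_subring R -> total_ring_of_fractions R -> noetherian R ->
  local_with R m -> krull_dim_one R ->
  (exists x, m x /\ regular_in R x) ->           (* Cohen-Macaulay, dim 1 *)
  canonical_module R m w ->
  qsubset R w -> qsubset w (integral_closure R) ->
  m alpha ->
  [/\ (gAGL R m w -> forall n, local_with (colon m m) n ->
         (forall b, colon m m b -> exists r, R r /\ n (b - r)) ->
         qsubset (prod m m) (colon R (prod w w))),
      (~ gorenstein R m -> qseteq (smul alpha m) (prod m m) ->
         qseteq (colon (colon R w) m)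
                (fun x => exists y, colon R w y /\ x = y / alpha)),
      (qseteq (smul alpha m) (prod m m) -> ~ almost_gorenstein R m w ->
         ~ colon R w alpha)
    & exists g : seq Q, min_gens R m g /\
         forall i, (i < size g)%N -> regular_in R g`_i].
Proof.
move=> HR [units_regular _] Hn Hl _ CM Hc _ wI ma.
have unit_alpha : qseteq (smul alpha m) (prod m m) -> alpha \is a GRing.unit.
  move=> [_ Hsq]; have [x [mx rx]] := CM.
  exact: (units_regular _ (reduction_regular HR Hl ma Hsq mx rx)).
split.
- by move=> Hg n Hn' Hres; apply: (gAGL_maxideal_sq_sub HR Hl wI Hg Hn' Hres).
- move=> ng Hsq.
  exact: (colon_colon_canonical_maxideal HR Hl ma Hsq.2 (unit_alpha Hsq) Hc ng).
- move=> Hsq nag Cw; apply: nag.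
  exact: (almost_gorenstein_of_colon_canonical HR Hl ma Hsq.2 (unit_alpha Hsq) wI Cw).
- exact: (regular_min_gens_exists HR Hl Hn CM).
Qed.
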